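(* Let $I\subset S=K[x_1,\dots,x_t]$ be a nonzero proper monomial ideal. Then there exist positive integers $n_0$ and $d$ such that $v(I^{n+1})\le n\,\alpha(I)+d$ for all $n\ge n_0$.
   Context: $K$ is a field and $S$ is standard graded. For a proper graded ideal $J$, the $v$-number is $v(J)=\min\{k\ge 0 : \exists f\in S_k,\ \mathcal P\in\operatorname{Ass}(S/J) \text{ with } (J:f)=\mathcal P\}$. For a nonzero graded ideal $I$, $\alpha(I)=\min\{\deg f : f\in I\setminus\{0\} \text{ homogeneous}\}$. *)

From Stdlib Require Import ClassicalEpsilon.
From mathcomp Require Import all_boot all_algebra.
From mathcomp Require Import mpoly.

Set Implicit Arguments.
Unset Strict Implicit.
Unset Printing Implicit Defensive.

Import GRing.Theory.
Local Open Scope ring_scope.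

Definition asb (Q : Prop) : bool :=
  if excluded_middle_informative Q then true else false.

Lemma asbP (Q : Prop) : asb Q <-> Q.
Proof. by rewrite /asb; case: excluded_middle_informative. Qed.

(* min { k | P k }, with the (irrelevant) convention 0 when no such k exists *)
Definition min_nat (P : nat -> Prop) : nat :=
  match excluded_middle_informative (exists k, P k) with
  | left h =>
      let h' : exists k, asb (P k) :=
        match h with ex_intro k hk => ex_intro _ k (proj2 (asbP (P k)) hk) end in
      ex_minn h'
  | right _ => 0%N
  end.

Section Ideals.
Variables (K : fieldType) (t : nat).
Local Notation S := {mpoly K[t]}.

Definition ideal_gen (G : S -> Prop) (f : S) : Prop :=
  exists s : seq (S * S), {in s, forall x, G x.2} /\ f = \sum_(x <- s) x.1 * x.2.

Definition is_ideal (I : S -> Prop) : Prop :=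
  [/\ I 0, (forall a b, I a -> I b -> I (a + b)) & (forall r a, I a -> I (r * a))].

Definition monomial_ideal (I : S -> Prop) : Prop :=
  exists M : 'X_{1..t} -> Prop,
    forall f, I f <-> ideal_gen (fun g => exists m, M m /\ g = 'X_[m]) f.

Definition ideal_pow (I : S -> Prop) (n : nat) : S -> Prop :=
  ideal_gen (fun g => exists s : seq S,
     [/\ size s = n, {in s, forall x, I x} & g = \prod_(x <- s) x]).

Definition colon (J : S -> Prop) (f : S) : S -> Prop := fun g => J (g * f).

Definition prime_ideal (P : S -> Prop) : Prop :=
  [/\ is_ideal P, ~ P 1 & forall a b, P (a * b) -> P a \/ P b].

(* associated primes of S/J : primes of the form (J : g) *)
Definition Ass (J : S -> Prop) (P : S -> Prop) : Prop :=
  prime_ideal P /\ exists g : S, forall x, P x <-> colon J g x.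

Definition v_number (J : S -> Prop) : nat :=
  min_nat (fun k => exists f : S, f \is k.-homog /\
             exists P, Ass J P /\ forall x, colon J f x <-> P x).

Definition alpha (I : S -> Prop) : nat :=
  min_nat (fun k => exists f : S, [/\ I f, f != 0 & f \is k.-homog]).

End Ideals.

From Stdlib Require Import ClassicalEpsilon Classical.
From mathcomp Require Import all_boot all_algebra.
From mathcomp Require Import mpoly zify ring.
From Stdlib Require Import Lia.

Set Implicit Arguments.
Unset Strict Implicit.
Unset Printing Implicit Defensive.

Import GRing.Theory.
Local Open Scope ring_scope.

(* Fix a monomial [u] of [I] of degree alpha(I) and let [L] be the set of
   exponents [x] such that X^x u^n lies in I^(n+1) for some [n]; [L] is upward
   closed and misses 0.  Pick [w] outside [L] with as many directions [e_i]
   into [L] as possible: then [w + m] lies in [L] exactly when [m] involves one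
   of these directions.  Membership of X^x u^n in I^(n+1) persists as [n]
   grows, so for large [n] the colon ideal (I^(n+1) : X^w u^n) is the prime
   ideal generated by the corresponding variables, whence
   v(I^(n+1)) <= n alpha(I) + deg w. *)

Lemma min_natP (P : nat -> Prop) k : P k -> P (min_nat P) /\ (min_nat P <= k)%N.
Proof.
move=> Pk; rewrite /min_nat; case: excluded_middle_informative => [h|]; last first.
  by move=> nP; exfalso; apply: nP; exists k.
by case: ex_minnP => m /asbP Pm minm; split => //; apply/minm/asbP.
Qed.

Lemma eventually_forall (T : finType) (P : T -> nat -> Prop) :
  (forall i, exists N, forall n, (N <= n)%N -> P i n) ->
  exists N, forall i n, (N <= n)%N -> P i n.
Proof.
move=> evP.
suff [N PN] : exists N, forall i, i \in enum T -> forall n, (N <= n)%N -> P i n.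
  by exists N => i; apply: PN; rewrite mem_enum.
elim: (enum T) => [|i s [N PN]]; first by exists 0%N.
have [Ni PNi] := evP i; exists (maxn N Ni) => j; rewrite inE => ij n.
by rewrite geq_max => /andP [? ?]; case/orP: ij => [/eqP -> | /PN]; [apply: PNi | apply].
Qed.

Section Polynomials.
Variables (K : fieldType) (t : nat).
Local Notation S := {mpoly K[t]}.
Local Notation M := 'X_{1..t}.
Implicit Types (G : S -> Prop) (p q : S) (E : M -> Prop).

Lemma ideal_gen0 G : ideal_gen G 0.
Proof. by exists [::]; rewrite big_nil. Qed.

Lemma ideal_genD G p q : ideal_gen G p -> ideal_gen G q -> ideal_gen G (p + q).
Proof.
move=> [s1 [G1 ->]] [s2 [G2 ->]]; exists (s1 ++ s2); split; last by rewrite big_cat.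
by move=> x; rewrite mem_cat => /orP [/G1|/G2].
Qed.

Lemma ideal_genMl G r p : ideal_gen G p -> ideal_gen G (r * p).
Proof.
move=> [s [Gs ->]]; exists [seq (r * x.1, x.2) | x <- s]; split.
  by move=> x /mapP [y /Gs Gy ->].
by rewrite big_map big_distrr /=; apply: eq_bigr => x _; rewrite mulrA.
Qed.

Lemma ideal_gen_base G g : G g -> ideal_gen G g.
Proof.
move=> Gg; exists [:: (1, g)]; rewrite big_seq1 mul1r; split => //.
by move=> x; rewrite inE => /eqP ->.
Qed.

Lemma ideal_gen_sum G (T : eqType) (s : seq T) (F : T -> S) :
  (forall x, x \in s -> ideal_gen G (F x)) -> ideal_gen G (\sum_(x <- s) F x).
Proof.
elim: s => [|x s IHs] GF; first by rewrite big_nil; apply: ideal_gen0.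
rewrite big_cons; apply: ideal_genD; first by apply: GF; rewrite mem_head.
by apply: IHs => y ys; apply: GF; rewrite inE ys orbT.
Qed.

Definition supp_in E p := forall m, m \in msupp p -> E m.

Definition upward_closed E := forall m b, E m -> E (b + m)%MM.

Lemma eq_supp_in E1 E2 p : (forall m, E1 m <-> E2 m) -> supp_in E1 p <-> supp_in E2 p.
Proof. by move=> eqE; split => H m /H /eqE. Qed.

Lemma supp_in0 E : supp_in E 0.
Proof. by move=> m; rewrite -mpolyC0 msupp0. Qed.

Lemma supp_inD E p q : supp_in E p -> supp_in E q -> supp_in E (p + q).
Proof. by move=> Ep Eq m /msuppD_le; rewrite mem_cat => /orP [/Ep|/Eq]. Qed.

Lemma supp_inN E p : supp_in E p -> supp_in E (- p).
Proof. by move=> Ep m; rewrite (perm_mem (msuppN p)) => /Ep. Qed.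

Lemma supp_inZ E c p : supp_in E p -> supp_in E (c *: p).
Proof. by move=> Ep m /msuppZ_le /Ep. Qed.

Lemma supp_inX E m : E m -> supp_in E 'X_[m].
Proof. by move=> Em m'; rewrite msuppX inE => /eqP ->. Qed.

Lemma supp_inM E1 E2 E p q :
  (forall m1 m2, E1 m1 -> E2 m2 -> E (m1 + m2)%MM) ->
  supp_in E1 p -> supp_in E2 q -> supp_in E (p * q).
Proof.
move=> E12 E1p E2q m /msuppM_le /allpairsP [[m1 m2] /= [m1p m2q ->]].
by apply: E12; [apply: E1p | apply: E2q].
Qed.

Lemma supp_inMl E r p : upward_closed E -> supp_in E p -> supp_in E (r * p).
Proof. by move=> upE; apply: (@supp_inM (fun=> True)) => // m1 m2 _; apply: upE. Qed.

Lemma supp_in_sum E (T : Type) (s : seq T) (P : pred T) (F : T -> S) :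
  (forall x, P x -> supp_in E (F x)) -> supp_in E (\sum_(x <- s | P x) F x).
Proof.
move=> EF; elim: s => [|x s IHs]; first by rewrite big_nil; apply: supp_in0.
by rewrite big_cons; case: ifP => Px //; apply: supp_inD => //; apply: EF.
Qed.

Lemma supp_in_ideal_gen E G p : upward_closed E -> (forall g, G g -> supp_in E g) ->
  ideal_gen G p -> supp_in E p.
Proof.
move=> upE EG [s [Gs ->]]; rewrite big_seq; apply: supp_in_sum => x xs.
by apply: supp_inMl => //; apply/EG/Gs.
Qed.

Lemma supp_in_mulX E f p :
  supp_in E (p * 'X_[f]) <-> supp_in (fun m => E (f + m)%MM) p.
Proof.
have suppMX := perm_mem (msuppMX p f).
split => Ep m; first by move=> mp; apply: Ep; rewrite suppMX map_f.
by rewrite suppMX => /mapP [m' /Ep ? ->].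
Qed.

Lemma supp_in_split E p : exists q r,
  [/\ p = q + r, supp_in (fun m => ~ E m) q & supp_in E r].
Proof.
pose term m := p@_m *: 'X_[m].
exists (\sum_(m <- msupp p | asb (~ E m)) term m),
       (\sum_(m <- msupp p | ~~ asb (~ E m)) term m); split.
- by rewrite {1}(mpolyE p) (bigID (fun m => asb (~ E m))).
- by apply: supp_in_sum => m /asbP nEm; apply: supp_inZ; apply: supp_inX.
- apply: supp_in_sum => m /negP nnEm; apply: supp_inZ; apply: supp_inX.
  by apply: NNPP => nEm; apply/nnEm/asbP.
Qed.

(* The product of the parts of [a] and [b] supported off [E] is nonzero,
   supported off [E], and congruent to [a * b] modulo [supp_in E]. *)
Lemma prime_ideal_supp_in E : upward_closed E ->
  (forall m1 m2, ~ E m1 -> ~ E m2 -> ~ E (m1 + m2)%MM) -> ~ E 0%MM ->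
  prime_ideal (supp_in E).
Proof.
move=> upE addE E0; split.
- split; [exact: supp_in0 | exact: supp_inD | by move=> r p; apply: supp_inMl].
- by move=> E1; apply/E0/E1; rewrite -mpolyC1 msupp1 mem_head.
move=> a b Eab; apply: NNPP => /not_or_and [nEa nEb].
have [qa [ra [defa Eqa Era]]] := supp_in_split E a.
have [qb [rb [defb Eqb Erb]]] := supp_in_split E b.
subst a b.
have nz (q r : S) : ~ supp_in E (q + r) -> supp_in E r -> q != 0.
  by move=> nEqr Er; apply: contra_notN nEqr => /eqP ->; rewrite add0r.
have E_q : supp_in E (qa * qb).
  have -> : qa * qb = (qa + ra) * (qb + rb) - (ra * (qb + rb) + qa * rb) by ring.
  apply: supp_inD => //; apply: supp_inN; apply: supp_inD; last exact: supp_inMl.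
  by rewrite mulrC; apply: supp_inMl.
have nE_q : supp_in (fun m => ~ E m) (qa * qb) by apply: supp_inM Eqa Eqb.
have : qa * qb != 0 by apply: mulf_neq0; [exact: nz nEa Era | exact: nz nEb Erb].
rewrite -msupp_eq0; case Eq0: (msupp _) => [//|m s] _.
have mq : m \in msupp (qa * qb) by rewrite Eq0 mem_head.
exact: nE_q m mq (E_q m mq).
Qed.

Lemma var_prime (T : 'I_t -> Prop) :
  prime_ideal (supp_in (fun m : M => exists i, T i /\ (0 < m i)%N)).
Proof.
apply: prime_ideal_supp_in.
- by move=> m b [i [Ti mi]]; exists i; rewrite mnmDE ltn_addl.
- move=> m1 m2 nE1 nE2 [i [Ti]]; rewrite mnmDE addn_gt0.
  by case/orP => mi; [apply: nE1 | apply: nE2]; exists i.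
- by case=> i []; rewrite mnm0E.
Qed.

Lemma v_number_le_mdeg (J P : S -> Prop) (f : M) : prime_ideal P ->
  (forall x, colon J 'X_[f] x <-> P x) -> (v_number J <= mdeg f)%N.
Proof.
move=> primeP colonP; apply: (proj2 (min_natP _)).
exists 'X_[f]; split; first by rewrite dhomogX.
by exists P; split => //; split => //; exists 'X_[f] => x; rewrite colonP.
Qed.

Section MonomialIdeal.
Variable I : S -> Prop.

(* The exponents of the monomials of I^k: the base case [True] makes [m] any
   multiple of a sum of [k] exponents of monomials of [I]. *)
Fixpoint pow_exps k m : Prop :=
  if k is k'.+1 then exists a m', [/\ I 'X_[a], pow_exps k' m' & m = (m' + a)%MM]
  else True.

Lemma pow_exps_upc k : upward_closed (pow_exps k).
Proof.
elim: k => [//|k IHk] m b [a [m' [Ia Em' ->]]].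
by exists a, (b + m')%MM; rewrite addmA; split => //; apply: IHk.
Qed.

Lemma pow_exps_add k a m : I 'X_[a] -> pow_exps k m -> pow_exps k.+1 (m + a)%MM.
Proof. by move=> Ia Em; exists a, m. Qed.

Lemma pow_exps_mdeg al k m : (forall a, I 'X_[a] -> al <= mdeg a)%N ->
  pow_exps k m -> (k * al <= mdeg m)%N.
Proof.
move=> al_le; elim: k m => [//|k IHk] m [a [m' [Ia Em' ->]]].
by rewrite mdegD mulSn addnC leq_add ?IHk ?al_le.
Qed.

Lemma ideal_pow_X k m : pow_exps k m -> ideal_pow I k 'X_[m].
Proof.
suff: pow_exps k m -> exists b s,
    [/\ size s = k, {in s, forall x, I x} & 'X_[m] = 'X_[b] * \prod_(x <- s) x].
  move=> split_m /split_m [b [s [sz Is ->]]]; apply/ideal_genMl/ideal_gen_base; by exists s.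
elim: k m => [|k IHk] m; first by exists m, [::]; rewrite big_nil mulr1.
case=> a [m' [Ia /IHk [b [s [sz Is defm']]] ->]].
exists b, ('X_[a] :: s); split; first by rewrite /= sz.
  by move=> x; rewrite inE => /orP [/eqP -> | /Is].
by rewrite big_cons mpolyXD defm' -mulrA [_ * 'X_[a]]mulrC mulrA.
Qed.

Hypothesis monoI : monomial_ideal I.

Lemma monomial_ideal_supp p : I p -> supp_in (fun m => I 'X_[m]) p.
Proof.
have [G defI] := monoI; rewrite defI => Ip.
apply: (supp_in_ideal_gen _ _ Ip) => [m b | g [a [Ga ->]]].
  by rewrite !defI mpolyXD; apply: ideal_genMl.
by apply: supp_inX; rewrite defI; apply: ideal_gen_base; exists a.
Qed.

Lemma ideal_pow_supp k p : ideal_pow I k p -> supp_in (pow_exps k) p.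
Proof.
apply: supp_in_ideal_gen; first exact: pow_exps_upc.
move=> g [s [<- Is ->]] {k}; elim: s Is => [|x s IHs] Is.
  by rewrite big_nil => m; rewrite -mpolyC1 msupp1 inE.
rewrite big_cons mulrC; apply: (@supp_inM (pow_exps (size s)) (fun m => I 'X_[m])).
- by move=> m1 m2 Em1 Im2; apply: pow_exps_add.
- by apply: IHs => y ys; apply: Is; rewrite inE ys orbT.
- by apply: monomial_ideal_supp; apply: Is; rewrite mem_head.
Qed.

Lemma ideal_pow_suppP k p : ideal_pow I k p <-> supp_in (pow_exps k) p.
Proof.
split; first exact: ideal_pow_supp.
move=> Ep; rewrite (mpolyE p); apply: ideal_gen_sum => m mp.
by rewrite -mul_mpolyC; apply/ideal_genMl/ideal_pow_X/Ep.
Qed.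

Lemma alphaP a : I 'X_[a] ->
  (exists f, [/\ I f, f != 0 & f \is (alpha I).-homog]) /\ (alpha I <= mdeg a)%N.
Proof.
move=> Ia; apply: min_natP; exists 'X_[a].
by rewrite dhomogX -msupp_eq0 msuppX.
Qed.

Lemma alpha_attained : (exists f, I f /\ f != 0) ->
  exists u, I 'X_[u] /\ mdeg u = alpha I.
Proof.
have supp_nz (f : S) : f != 0 -> exists m, m \in msupp f.
  by rewrite -msupp_eq0; case: (msupp f) => [//|m s] _; exists m; rewrite mem_head.
case=> f [If /supp_nz [m mf]].
have [[g [Ig /supp_nz [u ug] homg]] _] := alphaP (monomial_ideal_supp If mf).
by exists u; split; [apply: monomial_ideal_supp Ig _ ug | apply: dhomog_mf homg _ ug].
Qed.

End MonomialIdeal.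

Lemma addm_exchange_unit (x m : M) (i : 'I_t) :
  (0 < m i)%N -> (m + x = (m - U_(i)) + (x + U_(i)))%MM.
Proof. by move=> mi; rewrite [(x + _)%MM]addmC addmA submK // lep1mP -lt0n. Qed.

Section ColonWitness.
Variable L : M -> Prop.
Hypotheses (upL : upward_closed L) (L0 : ~ L 0%MM).

Let dirs w := [set i : 'I_t | asb (L (w + U_(i))%MM)].

Lemma in_dirs w i : i \in dirs w <-> L (w + U_(i))%MM.
Proof. by rewrite inE; apply: asbP. Qed.

(* If some [w + m] with [m] avoiding the directions of [w] lies in [L], move
   [w] towards a degree-minimal such [m], stopping one step short. *)
Lemma dirs_grow w : ~ L w ->
  ~ (forall m, L (w + m)%MM -> exists i, L (w + U_(i))%MM /\ (0 < m i)%N) ->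
  exists w', ~ L w' /\ (#|dirs w| < #|dirs w'|)%N.
Proof.
move=> nLw nQ.
pose P d := exists m,
  [/\ mdeg m = d, L (w + m)%MM & forall i, L (w + U_(i))%MM -> m i = 0%N].
have [d Pd] : exists d, P d.
  apply: NNPP => nP; apply: nQ => m Lm; apply: NNPP => nI; apply: nP.
  exists (mdeg m), m; split => // i Li; apply/eqP; rewrite -leqn0 leqNgt.
  by apply/negP => mi; apply: nI; exists i.
have [[m [dm Lm m_off]] _] := min_natP Pd.
have [j mj] : exists j, (0 < m j)%N.
  apply: NNPP => nj; apply/nLw; suff m0 : m = 0%MM by rewrite -[w]addm0 -m0.
  apply/mnmP => i; rewrite mnm0E; apply/eqP; rewrite -leqn0 leqNgt.
  by apply/negP => mi; apply: nj; exists i.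
have mjE : (m - U_(j) + U_(j))%MM = m by rewrite submK // lep1mP -lt0n.
exists (w + (m - U_(j)))%MM; split.
  move=> Lw'; have Pd' : P (mdeg (m - U_(j))%MM).
    by exists (m - U_(j))%MM; split => // i /m_off; rewrite mnmBE => ->.
  by have := proj2 (min_natP Pd'); rewrite -dm -{1}mjE mdegD mdeg1 addn1 ltnn.
apply: proper_card; apply/properP; split.
  apply/subsetP => i /in_dirs Li; apply/in_dirs.
  by rewrite [(w + _)%MM]addmC -addmA; apply: upL.
exists j; first by apply/in_dirs; rewrite -addmA mjE.
by apply/negP => /in_dirs /m_off mj0; rewrite mj0 in mj.
Qed.

(* A point off [L] with the largest set of directions into [L]. *)
Lemma exists_colon_witness : exists w,
  forall m, L (w + m)%MM <-> exists i, L (w + U_(i))%MM /\ (0 < m i)%N.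
Proof.
pose C k := asb (exists w, ~ L w /\ #|dirs w| = k).
have C_le k : C k -> (k <= t)%N.
  by move=> /asbP [w [_ <-]]; rewrite -[t in (_ <= t)%N]card_ord max_card.
have C0 : exists k, C k by exists #|dirs 0%MM|; apply/asbP; exists 0%MM.
have [k /asbP [w [nLw <-]] max_w] := ex_maxnP C0 C_le.
have Qw m : L (w + m)%MM -> exists i, L (w + U_(i))%MM /\ (0 < m i)%N.
  move: m; apply: NNPP => nQ; have [w' [nLw' lt_ww']] := dirs_grow nLw nQ.
  have : C #|dirs w'| by apply/asbP; exists w'.
  by move/max_w; rewrite leqNgt lt_ww'.
exists w => m; split; first exact: Qw.
by case=> i [Li mi]; rewrite addmC (addm_exchange_unit _ mi); apply: upL.
Qed.

End ColonWitness.

Section Stabilization.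
Variables (I : S -> Prop) (u : M).

Definition stable_exps x := exists n, pow_exps I n.+1 (u *+ n + x)%MM.

Lemma stable_exps_upc : upward_closed stable_exps.
Proof.
move=> x b [n En]; exists n; rewrite addmA [(_ + b)%MM]addmC -addmA.
exact: pow_exps_upc.
Qed.

Lemma not_stable_exps0 : (forall a, I 'X_[a] -> mdeg u <= mdeg a)%N ->
  (0 < mdeg u)%N -> ~ stable_exps 0%MM.
Proof.
move=> u_min u_pos [n]; rewrite addm0 => /(pow_exps_mdeg u_min).
by rewrite mdegMn; move: u_pos; clear; nia.
Qed.

Hypothesis Iu : I 'X_[u].

Lemma pow_exps_shift x n n' : (n <= n')%N ->
  pow_exps I n.+1 (u *+ n + x)%MM -> pow_exps I n'.+1 (u *+ n' + x)%MM.
Proof.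
move/subnK <-; elim: (n' - n)%N => [//|k IHk] /IHk Ek.
by rewrite addSn mulmS -addmA [(u + _)%MM]addmC; apply: pow_exps_add.
Qed.

Hypothesis monoI : monomial_ideal I.
Variable w : M.
Hypothesis stable_w : forall m,
  stable_exps (w + m)%MM <-> exists i, stable_exps (w + U_(i))%MM /\ (0 < m i)%N.

Lemma stable_exps_eventually : exists N, forall i n, (N <= n)%N ->
  stable_exps (w + U_(i))%MM -> pow_exps I n.+1 (u *+ n + (w + U_(i)))%MM.
Proof.
apply: eventually_forall => i.
case: (classic (stable_exps (w + U_(i))%MM)) => [[N EN] | nS]; last by exists 0%N.
by exists N => n le_Nn _; apply: pow_exps_shift le_Nn EN.
Qed.

Lemma colon_pow_stable : exists N, forall n, (N <= n)%N -> forall x,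
  colon (ideal_pow I n.+1) 'X_[u *+ n + w] x <->
  supp_in (fun m => exists i, stable_exps (w + U_(i))%MM /\ (0 < m i)%N) x.
Proof.
have [N EN] := stable_exps_eventually.
exists N => n le_Nn x; rewrite /colon (ideal_pow_suppP monoI) supp_in_mulX.
apply: eq_supp_in => m; split => [Em | [i [Si mi]]].
  by apply/stable_w; exists n; rewrite addmA.
rewrite [(_ + m)%MM]addmC (addm_exchange_unit _ mi) -[(u *+ n + w + _)%MM]addmA.
by apply: pow_exps_upc; apply: EN.
Qed.

End Stabilization.

End Polynomials.

Theorem theorem4p7 (K : fieldType) (t : nat) (I : {mpoly K[t]} -> Prop) :
  monomial_ideal I ->
  (exists f, I f /\ f != 0) ->
  ~ I 1 ->
  exists n0 d : nat, [/\ (0 < n0)%N, (0 < d)%N &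
    forall n : nat, (n0 <= n)%N ->
      (v_number (ideal_pow I n.+1) <= n * alpha I + d)%N].
Proof.
move=> monoI nzI nI1.
have [u [Iu du]] := alpha_attained monoI nzI.
have u_min a : I 'X_[a] -> (mdeg u <= mdeg a)%N by rewrite du => /alphaP [].
have u_pos : (0 < mdeg u)%N.
  by rewrite lt0n mdeg_eq0; apply: contra_notN nI1 => /eqP u0; rewrite -mpolyX0 -u0.
have [w stable_w] :=
  exists_colon_witness (@stable_exps_upc _ _ I u) (not_stable_exps0 u_min u_pos).
have [N colonP] := colon_pow_stable Iu monoI stable_w.
exists N.+1, (mdeg w).+1; split => // n le_Nn.
apply: leq_trans (v_number_le_mdeg (@var_prime K t _) (colonP n (ltnW le_Nn))) _.
by rewrite mdegD mdegMn du mulnC leq_add2l.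
Qed.
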